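(* Let $(M,H,g)$ be a 3-dimensional ts-oriented contact sub-Lorentzian manifold and $p\in M$. Then there is an oriented orthonormal frame $(X_1,X_2)$ near $p$ such that the matrix $h$ at $p$ takes one of the following forms: (1) if $\det h(p)=0$: $h(p)\in\left\{\begin{pmatrix}0&0\\0&0\end{pmatrix},\begin{pmatrix}1&\pm1\\ \mp1&-1\end{pmatrix},\begin{pmatrix}-1&\pm1\\ \mp1&1\end{pmatrix}\right\}$; (2) if $\det h(p)>0$: $h(p)=\begin{pmatrix}0&\chi\\-\chi&0\end{pmatrix}$ for some $\chi\neq0$; (3) if $\det h(p)<0$: $h(p)=\begin{pmatrix}\chi&0\\0&-\chi\end{pmatrix}$ for some $\chi\ne0$. Moreover, if $h(p)\neq0$, the value of such a frame at $p$ is unique.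
   Context: An oriented orthonormal frame is a local frame $(X_1,X_2)$ of $H$ with $g(X_1,X_1)=-1$, $g(X_1,X_2)=0$, $g(X_2,X_2)=1$, compatible with the time and space orientations; any two differ by $(X_1',X_2')=(\cosh t\,X_1+\sinh t\,X_2,\ \sinh t\,X_1+\cosh t\,X_2)$. With $\eta$ the contact form vanishing on $H$ and $\eta([X_2,X_1])=1$, $X_3$ is defined by $\eta(X_3)=-1$, $X_3\lrcorner d\eta=0$, and the structure functions by $[X_1,X_3]=cX_1+c^2_{13}X_2$, $[X_2,X_3]=c^1_{23}X_1-cX_2$, $[X_1,X_2]=c^1_{12}X_1+c^2_{12}X_2+X_3$. The matrix $h$ (computed in a given frame) is $h=\begin{pmatrix}c&\frac{c^2_{13}-c^1_{23}}2\\ \frac{c^1_{23}-c^2_{13}}2&-c\end{pmatrix}$; under change of frame it changes by conjugation by an element of $SO^+_{1,1}(\mathbb{R})=\{\begin{psmallmatrix}\cosh t&\sinh t\\ \sinh t&\cosh t\end{psmallmatrix}\}$. *)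

From Stdlib Require Import Reals.
Open Scope R_scope.

Record M2 := mkM2 { m11 : R; m12 : R; m21 : R; m22 : R }.

Definition mmul (A B : M2) : M2 :=
  mkM2 (m11 A * m11 B + m12 A * m21 B) (m11 A * m12 B + m12 A * m22 B)
       (m21 A * m11 B + m22 A * m21 B) (m21 A * m12 B + m22 A * m22 B).

Definition det2 (A : M2) : R := m11 A * m22 A - m12 A * m21 A.

Definition zeroM2 : M2 := mkM2 0 0 0 0.

(* Element of SO^+_{1,1}(R): the change of oriented orthonormal frame
   (X1',X2') = (cosh t X1 + sinh t X2, sinh t X1 + cosh t X2).
   Every oriented orthonormal frame at p is obtained from a reference one
   by a unique such t. *)
Definition boost (t : R) : M2 := mkM2 (cosh t) (sinh t) (sinh t) (cosh t).

(* The matrix h computed in a frame from the structure functions c, c^2_{13}, c^1_{23}. *)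
Definition hmat (c c213 c123 : R) : M2 :=
  mkM2 c ((c213 - c123) / 2) ((c123 - c213) / 2) (- c).

(* h in the frame obtained from the reference frame by the boost of parameter t:
   conjugation by an element of SO^+_{1,1}(R) (boost (-t) is the inverse of boost t). *)
Definition h_in_frame (t : R) (h : M2) : M2 := mmul (boost (- t)) (mmul h (boost t)).

Definition nf_det_zero (h : M2) : Prop :=
  h = mkM2 0 0 0 0 \/
  h = mkM2 1 1 (-1) (-1) \/ h = mkM2 1 (-1) 1 (-1) \/
  h = mkM2 (-1) 1 (-1) 1 \/ h = mkM2 (-1) (-1) 1 1.

Definition nf_det_pos (h : M2) : Prop :=
  exists chi : R, chi <> 0 /\ h = mkM2 0 chi (- chi) 0.

Definition nf_det_neg (h : M2) : Prop :=
  exists chi : R, chi <> 0 /\ h = mkM2 chi 0 0 (- chi).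

Definition normal_form (h : M2) : Prop :=
  nf_det_zero h \/ nf_det_pos h \/ nf_det_neg h.

From Stdlib Require Import Reals Lra Psatz.
Open Scope R_scope.

(* Every h has the shape [[a, b], [-b, -a]].  In the null coordinates
   u = a + b, v = a - b, a boost of parameter t acts diagonally,
   (u, v) |-> (e^{2t} u, e^{-2t} v), so the frames at p form the orbit
   {(s u, v / s) | s > 0}.  The normal forms are exactly the points with
   u^2 = v^2, or with u v = 0 and u^2 + v^2 = 4; each nonzero orbit meets this
   set in exactly one point, and which normal form it is is decided by the
   invariant det h = - u v. *)

Lemma det2_mmul (A B : M2) : det2 (mmul A B) = det2 A * det2 B.
Proof. unfold det2, mmul; simpl; ring. Qed.

Lemma det2_boost (t : R) : det2 (boost t) = 1.
Proof.
  unfold det2, boost, cosh, sinh; simpl.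
  rewrite exp_Ropp; pose proof (exp_pos t); field; lra.
Qed.

Lemma det2_h_in_frame (t : R) (h : M2) : det2 (h_in_frame t h) = det2 h.
Proof. unfold h_in_frame; rewrite !det2_mmul, !det2_boost; ring. Qed.

Lemma normal_form_det (M : M2) :
  normal_form M ->
  (det2 M = 0 -> nf_det_zero M) /\ (det2 M > 0 -> nf_det_pos M) /\
  (det2 M < 0 -> nf_det_neg M).
Proof.
  intros [Hz | [Hp | Hn]].
  - assert (det2 M = 0)
      by (destruct Hz as [-> | [-> | [-> | [-> | ->]]]]; unfold det2; simpl; ring).
    repeat split; intros; auto; lra.
  - destruct Hp as [chi [Hchi ->]].
    assert (det2 (mkM2 0 chi (- chi) 0) > 0)
      by (unfold det2; simpl; assert (0 < chi * chi) by nra; lra).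
    repeat split; intros; try lra. exists chi; auto.
  - destruct Hn as [chi [Hchi ->]].
    assert (det2 (mkM2 chi 0 0 (- chi)) < 0)
      by (unfold det2; simpl; assert (0 < chi * chi) by nra; lra).
    repeat split; intros; try lra. exists chi; auto.
Qed.

Definition lightcone (u v : R) : M2 :=
  mkM2 ((u + v) / 2) ((u - v) / 2) ((v - u) / 2) (- ((u + v) / 2)).

Definition lightcone_normal (u v : R) : Prop :=
  u * u = v * v \/ (u * v = 0 /\ u * u + v * v = 4).

Lemma hmat_lightcone (c c213 c123 : R) :
  hmat c c213 c123 =
  lightcone (c + (c213 - c123) / 2) (c - (c213 - c123) / 2).
Proof. unfold hmat, lightcone; f_equal; field. Qed.

Lemma lightcone_0_0 : lightcone 0 0 = zeroM2.
Proof. unfold lightcone, zeroM2; f_equal; field. Qed.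

Lemma h_in_frame_lightcone (t u v : R) :
  h_in_frame t (lightcone u v) = lightcone (exp (2 * t) * u) (v / exp (2 * t)).
Proof.
  unfold h_in_frame, mmul, boost, lightcone, cosh, sinh; simpl.
  rewrite Ropp_involutive, exp_Ropp.
  replace (2 * t) with (t + t) by ring; rewrite exp_plus.
  pose proof (exp_pos t).
  f_equal; field; lra.
Qed.

Lemma lightcone_eq_mkM2 (u v a b c d : R) :
  lightcone u v = mkM2 a b c d -> u = a + b /\ v = a - b.
Proof. unfold lightcone; intros H; injection H; intros; lra. Qed.

Lemma normal_form_lightcone (u v : R) :
  normal_form (lightcone u v) <-> lightcone_normal u v.
Proof.
  unfold normal_form, nf_det_zero, nf_det_pos, nf_det_neg, lightcone_normal.
  split.
  - intros [[H | [H | [H | [H | H]]]] | [[chi [_ H]] | [chi [_ H]]]];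
      destruct (lightcone_eq_mkM2 _ _ _ _ _ _ H) as [-> ->];
      (left; ring) || (right; split; ring).
  - intros [Hsq | [Hprod Hsum]].
    + destruct (Req_dec u 0) as [Hu | Hu]; [left; left; unfold lightcone; f_equal; nra |].
      destruct (Rsqr_eq u v Hsq) as [<- | ->].
      * right; right; exists u; split; [exact Hu | unfold lightcone; f_equal; lra].
      * right; left; exists (- v); split; [lra | unfold lightcone; f_equal; lra].
    + left; right; unfold lightcone.
      destruct (Rmult_integral _ _ Hprod) as [-> | ->].
      * assert (Hv : v * v = 2 * 2) by lra.
        destruct (Rsqr_eq v 2 Hv) as [-> | ->].
        -- right; left; f_equal; lra.
        -- right; right; left; f_equal; lra.
      * assert (Hu : u * u = 2 * 2) by lra.
        destruct (Rsqr_eq u 2 Hu) as [-> | ->].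
        -- left; f_equal; lra.
        -- right; right; right; f_equal; lra.
Qed.

Lemma Rabs_mul_self (x : R) : Rabs x * Rabs x = x * x.
Proof. symmetry; exact (Rsqr_abs x). Qed.

Lemma lightcone_normal_scale (u v s : R) : 0 < s ->
  lightcone_normal (s * u) (v / s) <->
  s * s * (s * s) * (u * u) = v * v \/
  (u * v = 0 /\ s * s * (s * s) * (u * u) + v * v = 4 * (s * s)).
Proof.
  intros Hs; unfold lightcone_normal.
  assert (Hss : 0 < s * s) by nra.
  assert (Eu : s * u * (s * u) * (s * s) = s * s * (s * s) * (u * u)) by ring.
  assert (Ev : v / s * (v / s) * (s * s) = v * v) by (field; lra).
  assert (Euv : s * u * (v / s) = u * v) by (field; lra).
  rewrite Euv, <- Eu, <- Ev.
  split; intros [H | [Huv H]].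
  - left; rewrite H; reflexivity.
  - right; split; [exact Huv | rewrite <- Rmult_plus_distr_r, H; reflexivity].
  - left; apply (Rmult_eq_reg_r (s * s)); lra.
  - right; split; [exact Huv | apply (Rmult_eq_reg_r (s * s)); lra].
Qed.

Lemma lightcone_normal_scale_exists (u v : R) :
  exists s, 0 < s /\ lightcone_normal (s * u) (v / s).
Proof.
  enough (exists s, 0 < s /\
            (s * s * (s * s) * (u * u) = v * v \/
             (u * v = 0 /\ s * s * (s * s) * (u * u) + v * v = 4 * (s * s))))
    as [s [Hs H]] by (exists s; split; [| apply lightcone_normal_scale]; assumption).
  rewrite <- (Rabs_mul_self u), <- (Rabs_mul_self v).
  destruct (Req_dec u 0) as [-> | Hu]; destruct (Req_dec v 0) as [-> | Hv];
    rewrite ?Rabs_R0.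
  - exists 1; split; [lra | left; ring].
  - pose proof (Rabs_pos_lt v Hv).
    exists (Rabs v / 2); split; [lra | right; split; [ring | field]].
  - pose proof (Rabs_pos_lt u Hu).
    exists (2 / Rabs u); split; [apply Rdiv_lt_0_compat; lra | right; split; [ring | field; lra]].
  - pose proof (Rabs_pos_lt u Hu); pose proof (Rabs_pos_lt v Hv).
    assert (Hq : 0 < Rabs v / Rabs u) by (apply Rdiv_lt_0_compat; lra).
    exists (sqrt (Rabs v / Rabs u)); split; [now apply sqrt_lt_R0 | left].
    rewrite sqrt_sqrt by lra. field; lra.
Qed.

Lemma lightcone_normal_scale_unique (u v s s' : R) :
  ~ (u = 0 /\ v = 0) -> 0 < s -> 0 < s' ->
  lightcone_normal (s * u) (v / s) -> lightcone_normal (s' * u) (v / s') -> s = s'.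
Proof.
  intros Huv Hs Hs' Hn Hn'.
  apply lightcone_normal_scale in Hn, Hn'; try assumption.
  enough (s * s = s' * s') by nra.
  assert (Ha : 0 < s * s) by nra; assert (Ha' : 0 < s' * s') by nra.
  set (a := s * s) in *; set (a' := s' * s') in *; clearbody a a'.
  destruct (Req_dec u 0) as [-> | Hu]; destruct (Req_dec v 0) as [-> | Hv].
  - tauto.
  - assert (Hvv : 0 < v * v) by nra.
    destruct Hn as [H | [_ H]]; destruct Hn' as [H' | [_ H']]; nra.
  - assert (Huu : 0 < u * u) by nra.
    assert (Hpos : 0 < a * a * (u * u)) by (apply Rmult_lt_0_compat; nra).
    assert (Hpos' : 0 < a' * a' * (u * u)) by (apply Rmult_lt_0_compat; nra).
    destruct Hn as [H | [_ H]]; [lra |]; destruct Hn' as [H' | [_ H']]; [lra |].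
    assert (Hau : a * (u * u) = 4) by (apply (Rmult_eq_reg_l a); lra).
    assert (Hau' : a' * (u * u) = 4) by (apply (Rmult_eq_reg_l a'); lra).
    apply (Rmult_eq_reg_r (u * u)); lra.
  - assert (Huu : 0 < u * u) by nra.
    assert (Huv0 : u * v <> 0) by (intro H; apply Rmult_integral in H; tauto).
    destruct Hn as [H | [? _]]; [| contradiction]; destruct Hn' as [H' | [? _]]; [| contradiction].
    assert (Haa : a * a = a' * a') by (apply (Rmult_eq_reg_r (u * u)); lra).
    nra.
Qed.

Lemma exp_2mul_iff (t s : R) : 0 < s -> exp (2 * t) = s <-> t = ln s / 2.
Proof.
  intros Hs; split; [intros <-; rewrite ln_exp; field | intros ->].
  replace (2 * (ln s / 2)) with (ln s) by field; exact (exp_ln s Hs).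
Qed.

Theorem mainTheorem7 (c c213 c123 : R) :
  let h0 := hmat c c213 c123 in
  exists t : R,
    (det2 h0 = 0 -> nf_det_zero (h_in_frame t h0)) /\
    (det2 h0 > 0 -> nf_det_pos (h_in_frame t h0)) /\
    (det2 h0 < 0 -> nf_det_neg (h_in_frame t h0)) /\
    (h0 <> zeroM2 ->
       forall t' : R, normal_form (h_in_frame t' h0) -> boost t' = boost t).
Proof.
  intros h0.
  set (u := c + (c213 - c123) / 2); set (v := c - (c213 - c123) / 2).
  assert (Hh0 : h0 = lightcone u v) by apply hmat_lightcone.
  destruct (lightcone_normal_scale_exists u v) as [s [Hs Hn]].
  exists (ln s / 2).
  assert (Hnf : normal_form (h_in_frame (ln s / 2) h0)).
  { rewrite Hh0, h_in_frame_lightcone, (proj2 (exp_2mul_iff _ _ Hs) eq_refl).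
    now apply normal_form_lightcone. }
  destruct (normal_form_det _ Hnf) as [Hzero [Hpos Hneg]].
  rewrite det2_h_in_frame in Hzero, Hpos, Hneg.
  repeat split; try assumption.
  intros Hnz t' Hn'.
  rewrite Hh0, h_in_frame_lightcone in Hn'; apply normal_form_lightcone in Hn'.
  f_equal; apply (exp_2mul_iff _ _ Hs).
  apply (lightcone_normal_scale_unique u v); try assumption.
  - intros [Hu Hv]; apply Hnz; rewrite Hh0, Hu, Hv; apply lightcone_0_0.
  - apply exp_pos.
Qed.
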